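(* Let $A,B$ be nondeterministic parity tree automata over $\Sigma$, let $g$ be a guiding function from $B$ to $A$ that preserves acceptance, let $t$ be a $\Sigma$-tree, let $\rho_B$ be an accepting run of $B$ on $t$ and $\rho_A=g(\rho_B)$ (an accepting run of $A$ on $t$). Let $u\in\{0,1\}^*$ and $v\in\{0,1\}^+$ be such that $\rho_A(u)=\rho_A(u\cdot v)$ and $\rho_B(u)=\rho_B(u\cdot v)$. If the greatest priority on the edges of $\rho_B$ between positions $u$ and $u\cdot v$ (i.e., on the edges from $u\cdot v|_k$ to $u\cdot v|_{k+1}$ for $k<|v|$) is even, then the greatest priority on the corresponding edges of $\rho_A$ is even.
   Context: A $\Sigma$-tree is $t:\{0,1\}^*\to\Sigma$; $v|_k$ is the length-$k$ prefix of $v$. A nondeterministic $I$-parity tree automaton ($I$ a finite interval of naturals) is $(\Sigma,Q,q_I,\Delta,\Omega)$ with $Q$ finite, $\Delta\subseteq Q\times\Sigma\times Q\times Q$ complete, $\Omega:\Delta\to I^2$. A run on $t$ is $\rho:\{0,1\}^*\to\Delta$ with $\rho(\varepsilon)$ from $q_I$, $\rho(u)=(q,t(u),q_0,q_1)$ and $\rho(u\cdot d)$ from $q_d$; the edge from $u$ to $u\cdot d$ has priority the $d$-th component of $\Omega(\rho(u))$. A run is accepting if on every branch the $\limsup$ of edge priorities is even. A guiding function from $B$ to $A$ is $g:Q_A\times\Delta_B\to\Delta_A$ with $g(p,(q,a,q_0,q_1))=(p,a,p_0,p_1)$; for a run $\rho$ of $B$ on $t$, $g(\rho)(u)=g(s(u),\rho(u))=(s(u),t(u),p_0,p_1)$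 where $s(\varepsilon)=q_{I,A}$ and $s(u\cdot d)=p_d$. It preserves acceptance if $g(\rho)$ is accepting whenever $\rho$ is. *)

From mathcomp Require Import all_boot.
Set Implicit Arguments. Unset Strict Implicit. Unset Printing Implicit Defensive.

(* Positions of the binary tree are words u : seq bool (false = 0, true = 1);
   u . d is [rcons u d], u . v is [u ++ v], v|_k is [take k v]. *)

Definition tuple4 (Sigma Q : Type) := (Q * Sigma * Q * Q)%type.

Record automaton (Sigma : finType) := Automaton {
  state : finType;
  qinit : state;
  delta : pred (tuple4 Sigma state);
  complete : forall (q : state) (a : Sigma),
      exists q0 q1, delta (q, a, q0, q1);
  omega : {x : tuple4 Sigma state | delta x} -> (nat * nat)%type
}.

Section Auto.
Variable Sigma : finType.

Definition trans (A : automaton Sigma) := {x : tuple4 Sigma (state A) | @delta _ A x}.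

Definition tsrc (A : automaton Sigma) (d : trans A) : state A := (sval d).1.1.1.
Definition tlet (A : automaton Sigma) (d : trans A) : Sigma := (sval d).1.1.2.
Definition tsucc (A : automaton Sigma) (d : trans A) (dir : bool) : state A :=
  if dir then (sval d).2 else (sval d).1.2.
Definition tprio (A : automaton Sigma) (d : trans A) (dir : bool) : nat :=
  if dir then (omega d).2 else (omega d).1.

Definition tree := seq bool -> Sigma.

Definition is_run (A : automaton Sigma) (t : tree) (rho : seq bool -> trans A) : Prop :=
  tsrc (rho [::]) = qinit A /\
  (forall u, tlet (rho u) = t u) /\
  (forall u (dir : bool), tsrc (rho (rcons u dir)) = tsucc (rho u) dir).

(* "the limsup of the sequence p is even" for p : nat -> nat
   (an unbounded sequence has limsup infinity, which is not even) *)
Definition limsup_even (p : nat -> nat) : Prop :=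
  exists m, ~~ odd m /\
    (forall N, exists2 n, N <= n & p n = m) /\
    (exists N, forall n, N <= n -> p n <= m).

Definition branch_prefix (beta : nat -> bool) (n : nat) : seq bool := mkseq beta n.

Definition accepting (A : automaton Sigma) (rho : seq bool -> trans A) : Prop :=
  forall beta : nat -> bool,
    limsup_even (fun n => tprio (rho (branch_prefix beta n)) (beta n)).

Record guiding (B A : automaton Sigma) := Guiding {
  gfun : state A -> trans B -> trans A;
  gfun_src : forall p d, tsrc (gfun p d) = p;
  gfun_let : forall p d, tlet (gfun p d) = tlet d
}.

Fixpoint gstate_aux (B A : automaton Sigma) (g : guiding B A)
    (rho : seq bool -> trans B) (pref : seq bool) (p : state A) (w : seq bool)
    : state A :=
  match w with
  | [::] => p
  | dir :: w' =>
      gstate_aux g rho (rcons pref dir) (tsucc (gfun g p (rho pref)) dir) w'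
  end.

Definition gstate (B A : automaton Sigma) (g : guiding B A)
    (rho : seq bool -> trans B) (u : seq bool) : state A :=
  gstate_aux g rho [::] (qinit A) u.

Definition guided (B A : automaton Sigma) (g : guiding B A)
    (rho : seq bool -> trans B) : seq bool -> trans A :=
  fun u => gfun g (gstate g rho u) (rho u).

Definition preserves_acceptance (B A : automaton Sigma) (g : guiding B A) : Prop :=
  forall (t : tree) (rho : seq bool -> trans B),
    is_run t rho -> accepting rho -> accepting (guided g rho).

Definition max_prio_between (A : automaton Sigma) (rho : seq bool -> trans A)
    (u v : seq bool) : nat :=
  \max_(k < size v) tprio (rho (u ++ take k v)) (nth false v k).

End Auto.

From mathcomp Require Import all_boot.
From mathcomp Require Import zify.
From Stdlib Require Import Classical.
Set Implicit Arguments. Unset Strict Implicit. Unset Printing Implicit Defensive.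

(* Fold the tree along the loop: [fold_pos w] is the position reached by
   reading [w] from the root and jumping back to [u] whenever [u ++ v] is
   reached.  As [rhoB u = rhoB (u ++ v)], [rhoB \o fold_pos] is a run of [B]
   on [t \o fold_pos].  A branch of it either leaves the loop, and from then
   on follows a branch of [rhoB] (even limsup), or is the lasso [u v^omega],
   whose limsup is the maximal priority of [rhoB] on the loop (even).  Since
   also [g(rhoB)(u) = g(rhoB)(u ++ v)], guiding the folded run gives
   [g(rhoB) \o fold_pos], which is therefore accepting; along the lasso its
   limsup is the maximal priority of [g(rhoB)] on the loop. *)

Lemma prefix_rcons_take (T : eqType) (s : seq T) (x0 b : T) i : i < size s ->
  prefix (rcons (take i s) b) s = (b == nth x0 s i).
Proof.
move=> lt_i_s; rewrite prefixE size_rcons size_takel 1?ltnW //.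
by rewrite (take_nth x0) // eqseq_rcons eqxx.
Qed.

(* The index in [u ++ v] of step [n] of the lasso [u v^omega], for
   [a = size u] and [L = size v]. *)
Definition lasso_pos (a L n : nat) := if n < a then n else a + (n - a) %% L.

Section LassoPos.
Variables (a L : nat).
Hypothesis L_gt0 : 0 < L.

Lemma lasso_pos0 : lasso_pos a L 0 = 0.
Proof.
by rewrite /lasso_pos sub0n mod0n addn0; case: ifP => // /negbT; rewrite -eqn0Ngt => /eqP.
Qed.

Lemma lasso_pos_lt n : lasso_pos a L n < a + L.
Proof.
rewrite /lasso_pos; case: (ltnP n a) => [|_]; first lia.
by rewrite ltn_add2l ltn_pmod.
Qed.

Lemma lasso_pos_addn k : lasso_pos a L (a + k) = a + k %% L.
Proof. by rewrite /lasso_pos ltnNge leq_addr addKn. Qed.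

Lemma lasso_posS n : lasso_pos a L n.+1 =
  if (lasso_pos a L n).+1 == a + L then a else (lasso_pos a L n).+1.
Proof.
rewrite /lasso_pos; case: (ltnP n.+1 a) => [lt_n1a|le_an1].
  by rewrite ltnW //; case: eqP => //; lia.
case: (ltnP n a) => [lt_na|le_an].
  have -> : n.+1 = a by lia.
  by rewrite subnn mod0n addn0; case: eqP => //; lia.
rewrite subSn // modnS.
have dvd_mod : (L %| (n - a).+1) = (((n - a) %% L).+1 == L).
  rewrite /dvdn {1}(divn_eq (n - a) L) -addnS modnMDl.
  have := ltn_pmod (n - a) L_gt0; rewrite leq_eqVlt => /orP[/eqP->|lt_L].
    by rewrite modnn !eqxx.
  by rewrite modn_small // (ltn_eqF lt_L).
by rewrite dvd_mod -addnS eqn_add2l; case: ifP; rewrite ?addn0.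
Qed.

End LassoPos.

Lemma limsup_even_shift (p q : nat -> nat) N S :
  (forall k, p (N + k) = q (S + k)) -> limsup_even q -> limsup_even p.
Proof.
move=> eq_pq [m [even_m [inf_m [N1 le_m]]]]; exists m; split => //; split.
  move=> N0; have [n le_n qn] := inf_m (N0 + S).
  exists (N + (n - S)); first lia.
  by rewrite eq_pq subnKC // (leq_trans (leq_addl N0 S)).
exists (N + N1) => n le_n.
by rewrite -(subnKC (leq_trans (leq_addr N1 N) le_n)) eq_pq le_m //; lia.
Qed.

Lemma eq_limsup_even (p q : nat -> nat) : p =1 q -> limsup_even q -> limsup_even p.
Proof. by move=> eq_pq; apply: (limsup_even_shift (N := 0) (S := 0)). Qed.

Lemma limsup_even_periodic (p b : nat -> nat) a L : 0 < L ->
  (forall k, p (a + k) = b (k %% L)) ->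
  (limsup_even p <-> ~~ odd (\max_(k < L) b k)).
Proof.
move=> L_gt0 eq_pb; set M := \max_(k < L) b k.
have le_M n : a <= n -> p n <= M.
  move=> le_an; rewrite -(subnKC le_an) eq_pb.
  exact: (leq_bigmax (F := fun k : 'I_L => b k) (Ordinal (ltn_pmod (n - a) L_gt0))).
have inf_M N : exists2 n, N <= n & p n = M.
  have [k0 ->] : {k0 : 'I_L | M = b k0} by apply: eq_bigmax; rewrite card_ord.
  exists (a + (N * L + k0)); first by have := leq_pmull N L_gt0; lia.
  by rewrite eq_pb modnMDl modn_small.
split=> [[m [even_m [inf_m [N1 le_m]]]] | even_M].
  have [n1 le_an1 pn1] := inf_m a; have [n2 le_Nn2 pn2] := inf_M N1.
  suff -> : M = m by [].
  by apply/eqP; rewrite eqn_leq -{1}pn2 le_m //= -pn1 le_M.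
by exists M; split => //; split => //; exists a.
Qed.

Section Runs.
Variable Sigma : finType.

Lemma branch_prefixS (beta : nat -> bool) n :
  branch_prefix beta n.+1 = rcons (branch_prefix beta n) (beta n).
Proof. exact: mkseqS. Qed.

Lemma branch_prefixD (beta : nat -> bool) N k :
  branch_prefix beta (N + k) = branch_prefix beta N ++ mkseq (fun i => beta (N + i)) k.
Proof.
elim: k => [|k IHk]; first by rewrite addn0 cats0.
by rewrite addnS branch_prefixS IHk mkseqS rcons_cat.
Qed.

Lemma accepting_from (A : automaton Sigma) (rho : seq bool -> trans A) x beta :
  accepting rho -> limsup_even (fun k => tprio (rho (x ++ mkseq beta k)) (beta k)).
Proof.
pose gamma n := if n < size x then nth false x n else beta (n - size x).
have gamma_tail k : gamma (size x + k) = beta k by rewrite /gamma ltnNge leq_addr addKn.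
have prefix_gamma k : branch_prefix gamma (size x + k) = x ++ mkseq beta k.
  rewrite branch_prefixD (eq_mkseq gamma_tail); congr (_ ++ _).
  apply: (@eq_from_nth _ false); rewrite size_mkseq // => i lt_i.
  by rewrite nth_mkseq // /gamma lt_i.
move=> /(_ gamma); apply: (limsup_even_shift (N := 0) (S := size x)) => k.
by rewrite prefix_gamma gamma_tail.
Qed.

Lemma gstate_aux_rcons (A B : automaton Sigma) (g : guiding B A) rho pref p w d :
  gstate_aux g rho pref p (rcons w d) =
  tsucc (gfun g (gstate_aux g rho pref p w) (rho (pref ++ w))) d.
Proof.
elim: w pref p => [|x w IHw] pref p /=; first by rewrite cats0.
by rewrite IHw cat_rcons.
Qed.

Lemma gstate_rcons (A B : automaton Sigma) (g : guiding B A) rho w d :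
  gstate g rho (rcons w d) = tsucc (guided g rho w) d.
Proof. exact: gstate_aux_rcons. Qed.

Lemma tsrc_guided (A B : automaton Sigma) (g : guiding B A) rho w :
  tsrc (guided g rho w) = gstate g rho w.
Proof. exact: gfun_src. Qed.

End Runs.

Section Fold.
Variables (Sigma : finType) (u v : seq bool).
Hypothesis v_neq0 : v != [::].

Definition fold_step (x : seq bool) (d : bool) :=
  if rcons x d == u ++ v then u else rcons x d.

Definition fold_pos (w : seq bool) := foldl fold_step [::] w.

Definition lasso (n : nat) := nth false (u ++ v) (lasso_pos (size u) (size v) n).

Let size_v_gt0 : 0 < size v. Proof. by rewrite lt0n size_eq0. Qed.

Lemma fold_pos_rcons w d : fold_pos (rcons w d) = fold_step (fold_pos w) d.
Proof. exact: foldl_rcons. Qed.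

Lemma fold_pos_cat_off w s :
  ~~ prefix (fold_pos w) (u ++ v) -> fold_pos (w ++ s) = fold_pos w ++ s.
Proof.
rewrite /fold_pos foldl_cat; elim: s (foldl _ _ w) => [|d s IHs] x off_x /=.
  by rewrite cats0.
have off_xd : ~~ prefix (rcons x d) (u ++ v).
  by apply: contra off_x; rewrite -cats1; apply: catl_prefix.
rewrite /fold_step ifF; first by rewrite IHs // cat_rcons.
by apply: contraNF off_xd => /eqP ->; apply: prefix_refl.
Qed.

Lemma fold_pos_lasso n :
  fold_pos (branch_prefix lasso n) = take (lasso_pos (size u) (size v) n) (u ++ v).
Proof.
elim: n => [|n IHn]; first by rewrite lasso_pos0 take0.
have := lasso_pos_lt (size u) size_v_gt0 n; rewrite -size_cat.
set i := lasso_pos _ _ n => lt_i.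
have full_iff : (take i.+1 (u ++ v) == u ++ v) = (i.+1 == size (u ++ v)).
  apply/eqP/eqP => [/(congr1 size)|->]; [by rewrite size_takel | exact: take_size].
rewrite branch_prefixS fold_pos_rcons IHn /fold_step /lasso -take_nth //.
rewrite lasso_posS // -size_cat full_iff; case: ifP => // _.
by rewrite take_size_cat.
Qed.

Lemma fold_pos_deviate (beta : nat -> bool) N :
  branch_prefix beta N = branch_prefix lasso N -> beta N != lasso N ->
  ~~ prefix (fold_pos (branch_prefix beta N.+1)) (u ++ v).
Proof.
move=> eq_prefix ne_N; rewrite branch_prefixS fold_pos_rcons eq_prefix fold_pos_lasso.
have := lasso_pos_lt (size u) size_v_gt0 N; rewrite -size_cat => lt_pos.
have off : ~~ prefix (rcons (take (lasso_pos (size u) (size v) N) (u ++ v)) (beta N)) (u ++ v).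
  by rewrite (prefix_rcons_take false).
rewrite /fold_step ifF //; apply: contraNF off => /eqP ->; exact: prefix_refl.
Qed.

Lemma lasso_prio (C : automaton Sigma) (sigma : seq bool -> trans C) k :
  tprio (sigma (fold_pos (branch_prefix lasso (size u + k)))) (lasso (size u + k)) =
  tprio (sigma (u ++ take (k %% size v) v)) (nth false v (k %% size v)).
Proof.
rewrite fold_pos_lasso /lasso lasso_pos_addn takeD take_size_cat //.
by rewrite drop_size_cat // nth_cat ltnNge leq_addr addKn.
Qed.

Lemma limsup_fold_lasso (C : automaton Sigma) (sigma : seq bool -> trans C) :
  limsup_even (fun n => tprio (sigma (fold_pos (branch_prefix lasso n))) (lasso n)) <->
  ~~ odd (max_prio_between sigma u v).
Proof.
apply: (limsup_even_periodic
  (b := fun j => tprio (sigma (u ++ take j v)) (nth false v j)) size_v_gt0).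
exact: lasso_prio.
Qed.

Lemma is_run_fold (B : automaton Sigma) t (rho : seq bool -> trans B) :
  is_run t rho -> rho u = rho (u ++ v) -> is_run (t \o fold_pos) (rho \o fold_pos).
Proof.
move=> [run_src [run_let run_succ]] rho_loop; split; first exact: run_src.
split=> [w|w d /=]; first exact: run_let.
rewrite fold_pos_rcons /fold_step; case: eqP => [eq_uv|_]; last exact: run_succ.
by rewrite rho_loop -eq_uv run_succ.
Qed.

Lemma accepting_fold (B : automaton Sigma) (rho : seq bool -> trans B) :
  accepting rho -> ~~ odd (max_prio_between rho u v) -> accepting (rho \o fold_pos).
Proof.
move=> acc even_loop beta.
case: (classic (exists n, beta n != lasso n)) => [deviates|on_lasso].
  have [N ne_N min_N] := ex_minnP deviates.
  have eq_prefix : branch_prefix beta N = branch_prefix lasso N.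
    apply/eq_in_map => i; rewrite mem_iota add0n => /andP[_ lt_iN].
    by apply/eqP; apply: contraTT lt_iN => /min_N; rewrite -leqNgt.
  apply: (limsup_even_shift (N := N.+1) (S := 0)
    _ (accepting_from _ (fun i => beta (N.+1 + i)) acc)) => k /=.
  by rewrite branch_prefixD fold_pos_cat_off // fold_pos_deviate.
have eq_beta : beta =1 lasso.
  by move=> n; apply/eqP; apply: contra_notT on_lasso => ne_n; exists n.
apply: eq_limsup_even (proj2 (limsup_fold_lasso rho) even_loop) => n /=.
by rewrite /branch_prefix (eq_mkseq eq_beta) eq_beta.
Qed.

Lemma guided_fold (A B : automaton Sigma) (g : guiding B A) (rho : seq bool -> trans B) :
  gstate g rho u = gstate g rho (u ++ v) ->
  forall w, guided g (rho \o fold_pos) w = guided g rho (fold_pos w).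
Proof.
move=> gstate_loop.
suff gstate_fold w : gstate g (rho \o fold_pos) w = gstate g rho (fold_pos w).
  by move=> w; rewrite /guided gstate_fold.
elim/last_ind: w => [|w d IHw] //.
rewrite !gstate_rcons fold_pos_rcons {1}/guided IHw -gstate_rcons /fold_step.
by case: eqP => // ->.
Qed.

End Fold.

Theorem lemma1 (Sigma : finType) (A B : automaton Sigma) (g : guiding B A)
    (t : tree Sigma) (rhoB : seq bool -> trans B) :
  preserves_acceptance g ->
  is_run t rhoB -> accepting rhoB ->
  forall u v : seq bool, v != [::] ->
  guided g rhoB u = guided g rhoB (u ++ v) ->
  rhoB u = rhoB (u ++ v) ->
  ~~ odd (max_prio_between rhoB u v) ->
  ~~ odd (max_prio_between (guided g rhoB) u v).
Proof.
move=> preserves run_rhoB acc_rhoB u v v_neq0 guided_loop rhoB_loop even_B.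
have gstate_loop : gstate g rhoB u = gstate g rhoB (u ++ v).
  by rewrite -!tsrc_guided guided_loop.
have acc_A := preserves _ _ (is_run_fold run_rhoB rhoB_loop)
  (accepting_fold v_neq0 acc_rhoB even_B).
apply/(limsup_fold_lasso u v_neq0 (guided g rhoB)).
apply: eq_limsup_even (acc_A (lasso u v)) => n.
by rewrite /= (guided_fold gstate_loop).
Qed.
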